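(* Fix $H\in\mathbb{R}$ and consider the framed curvature flow with $\theta$-velocity $$\upsilon_\theta=\kappa H-(\kappa\,\partial_s\psi_3+2\,\partial_s\kappa\,\psi_3)\kappa^{-2}\psi_1+(\kappa^3+\kappa\psi_3^2-\partial_s^2\kappa)\kappa^{-2}\psi_2 .$$ Then the trajectory surface $\Sigma_{\underline t}$ generated by this flow has constant mean curvature equal to $H$.
   Context: $S^1=\mathbb{R}/2\pi\mathbb{Z}$; closed curves $\Gamma_t$ parametrized by $\gamma(t,\cdot):S^1\to\mathbb{R}^3$, $g=\|\partial_u\gamma\|$, $ds=g\,du$, $\partial_s=g^{-1}\partial_u$; Frenet frame $T,N,B$, curvature $\kappa$ (assumed positive where the formulas are used), torsion $\tau$. For an angle function $\theta$: $\nu_\theta=\cos\theta N+\sin\theta B$, $\beta_\theta=T\times\nu_\theta$, $\psi_1=\kappa\cos\theta$, $\psi_2=\kappa\sin\theta$, $\psi_3=\tau+\partial_s\theta$. Framed curvature flow: $\partial_t\gamma=\kappa\nu_\theta$, $\partial_t\theta=\upsilon_\theta$ on $[0,\underline t)\times S^1$. Trajectory surface $\Sigma_{\underline t}=\bigcup_{t\in[0,\underline t)}\Gamma_t$, parametrized by $(u,t)\mapsto\gamma(t,u)$; its mean curvature is $\mathrm{tr}(\mathrm{I\!I}\,\mathrm{I}^{-1})$ (sum of principal curvatures) with respect to the unit normal $\beta_\theta$. *)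

From Stdlib Require Import Reals List.
From Coquelicot Require Import Coquelicot.
Open Scope R_scope.

Definition V3 : Type := (R * R * R)%type.
Definition mkV (a b c : R) : V3 := (a, b, c).
Definition vx (v : V3) : R := fst (fst v).
Definition vy (v : V3) : R := snd (fst v).
Definition vz (v : V3) : R := snd v.
Definition vadd (v w : V3) : V3 := mkV (vx v + vx w) (vy v + vy w) (vz v + vz w).
Definition vscal (a : R) (v : V3) : V3 := mkV (a * vx v) (a * vy v) (a * vz v).
Definition dot (v w : V3) : R := vx v * vx w + vy v * vy w + vz v * vz w.
Definition cross (v w : V3) : V3 :=
  mkV (vy v * vz w - vz v * vy w)
      (vz v * vx w - vx v * vz w)
      (vx v * vy w - vy v * vx w).
Definition vnorm (v : V3) : R := sqrt (dot v v).

Definition Dv (f : R -> V3) (x : R) : V3 :=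
  mkV (Derive (fun y => vx (f y)) x)
      (Derive (fun y => vy (f y)) x)
      (Derive (fun y => vz (f y)) x).

(** iterated partial derivatives: [true] = d/dt, [false] = d/du *)
Fixpoint pd (w : list bool) (f : R -> R -> R) : R -> R -> R :=
  match w with
  | nil => f
  | b :: w' =>
      if b then (fun t u => Derive (fun t' => pd w' f t' u) t)
      else (fun t u => Derive (fun u' => pd w' f t u') u)
  end.

Definition smooth_on (D : R -> R -> Prop) (f : R -> R -> R) : Prop :=
  forall (w : list bool) (t u : R), D t u ->
    ex_derive (fun t' => pd w f t' u) t /\
    ex_derive (fun u' => pd w f t u') u /\
    continuous (fun p : R * R => pd w f (fst p) (snd p)) (t, u).

Definition smoothV_on (D : R -> R -> Prop) (gam : R -> R -> V3) : Prop :=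
  smooth_on D (fun t u => vx (gam t u)) /\
  smooth_on D (fun t u => vy (gam t u)) /\
  smooth_on D (fun t u => vz (gam t u)).

Section Curve.
Variables (gam : R -> R -> V3) (th : R -> R -> R) (t : R).

Definition gmet (u : R) : R := vnorm (Dv (gam t) u).
Definition dsS (F : R -> R) (u : R) : R := / gmet u * Derive F u.
Definition dsV (F : R -> V3) (u : R) : V3 := vscal (/ gmet u) (Dv F u).

Definition Tan (u : R) : V3 := vscal (/ gmet u) (Dv (gam t) u).
Definition kappa (u : R) : R := vnorm (dsV Tan u).
Definition Nor (u : R) : V3 := vscal (/ kappa u) (dsV Tan u).
Definition Bin (u : R) : V3 := cross (Tan u) (Nor u).
(** torsion: d_s N = -kappa T + tau B *)
Definition tors (u : R) : R := dot (dsV Nor u) (Bin u).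

Definition nu (u : R) : V3 :=
  vadd (vscal (cos (th t u)) (Nor u)) (vscal (sin (th t u)) (Bin u)).
Definition beta (u : R) : V3 := cross (Tan u) (nu u).
Definition psi1 (u : R) : R := kappa u * cos (th t u).
Definition psi2 (u : R) : R := kappa u * sin (th t u).
Definition psi3 (u : R) : R := tors u + dsS (th t) u.

Definition upsilon (H : R) (u : R) : R :=
  kappa u * H
  - (kappa u * dsS psi3 u + 2 * dsS kappa u * psi3 u) * / (kappa u ^ 2) * psi1 u
  + (kappa u ^ 3 + kappa u * psi3 u ^ 2 - dsS (dsS kappa) u) * / (kappa u ^ 2) * psi2 u.
End Curve.

(** * Mean curvature of the trajectory surface (u,t) |-> gam t u,
      w.r.t. the unit normal beta_theta: tr(II I^{-1}) = sum of principal
      curvatures = (L G - 2 M F + N E) / (E G - F^2). *)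
Definition mean_curv (gam : R -> R -> V3) (th : R -> R -> R) (t u : R) : R :=
  let Xu := Dv (gam t) u in
  let Xt := Dv (fun t' => gam t' u) t in
  let Xuu := Dv (Dv (gam t)) u in
  let Xut := Dv (fun t' => Dv (gam t') u) t in
  let Xtt := Dv (fun t' => Dv (fun t'' => gam t'' u) t') t in
  let n := beta gam th t u in
  let E := dot Xu Xu in
  let F := dot Xu Xt in
  let G := dot Xt Xt in
  let L := dot Xuu n in
  let M := dot Xut n in
  let N := dot Xtt n in
  (L * G - 2 * M * F + N * E) / (E * G - F ^ 2).

From Stdlib Require Import Reals List Lra.
From Coquelicot Require Import Coquelicot.
Open Scope R_scope.

(* Along the flow, gamma_u = g T and gamma_t = kappa nu are orthogonal, so the mean
   curvature of the trajectory surface is II(T, T) + II(nu, nu).  The Frenet equations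
   give II(T, T) = -kappa sin theta.  Since nu and beta rotate together in the (N, B)-plane,
   gamma_tt . beta = kappa (d_t theta + d_t N . B).  The normal N is an algebraic function of
   gamma_u and gamma_uu, so commuting the t- and u-derivatives expresses d_t N . B through
   d_u (kappa nu) and d_u^2 (kappa nu), which the Frenet equations evaluate.  The prescribed
   theta-velocity is exactly what makes the resulting sum equal to H. *)

(** * Smooth functions of one real variable *)

Ltac eta_Derive :=
  repeat match goal with
  | |- context [Derive (fun x0 => ?f x0)] => change (Derive (fun x0 => f x0)) with (Derive f)
  | H : context [Derive (fun x0 => ?f x0)] |- _ =>
      change (Derive (fun x0 => f x0)) with (Derive f) in H
  end.

Fixpoint Cn (n : nat) (f : R -> R) : Prop :=
  match n with
  | O => True
  | S n => (forall x, ex_derive f x) /\ Cn n (Derive f)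
  end.

Definition Cinf (f : R -> R) : Prop := forall n, Cn n f.

Lemma Cn_ext n : forall f g, (forall x, f x = g x) -> Cn n f -> Cn n g.
Proof.
  induction n as [|n IH]; simpl; auto.
  intros f g E [Hf Hf']. split.
  - intro x; apply (ex_derive_ext f); auto.
  - apply (IH (Derive f)); auto. intro; apply Derive_ext; auto.
Qed.

Lemma Cn_S n : forall f, Cn (S n) f -> Cn n f.
Proof.
  induction n as [|n IH]; simpl; auto.
  intros f [Hf [Hf' Hf'']]. split; auto. apply IH; simpl; auto.
Qed.

Lemma Cn_plus n : forall f g, Cn n f -> Cn n g -> Cn n (fun x => f x + g x).
Proof.
  induction n as [|n IH]; simpl; auto.
  intros f g [Hf Hf'] [Hg Hg']. split.
  - intro x; auto_derive; auto.
  - apply (Cn_ext n (fun x => Derive f x + Derive g x)); auto.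
    intro; rewrite Derive_plus; auto.
Qed.

Lemma Cn_const n c : Cn n (fun _ => c).
Proof.
  revert c; induction n as [|n IH]; simpl; auto. intro c; split.
  - intro; apply ex_derive_const.
  - apply (Cn_ext n (fun _ => 0)); auto. intro; rewrite Derive_const; auto.
Qed.

Lemma Cn_mult n : forall f g, Cn n f -> Cn n g -> Cn n (fun x => f x * g x).
Proof.
  induction n as [|n IH]; simpl; auto.
  intros f g [Hf Hf'] [Hg Hg']. split.
  - intro x; apply ex_derive_mult; auto.
  - apply (Cn_ext n (fun x => Derive f x * g x + f x * Derive g x)).
    + intro; rewrite Derive_mult; auto.
    + apply Cn_plus; apply IH; auto; apply Cn_S; simpl; auto.
Qed.

Lemma Cn_inv n : forall f, (forall x, f x <> 0) -> Cn n f -> Cn n (fun x => / f x).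
Proof.
  induction n as [|n IH]; simpl; auto.
  intros f Hf0 [Hf Hf']. split.
  - intro x; apply ex_derive_inv; auto.
  - apply (Cn_ext n (fun x => (-1 * Derive f x) * (/ f x * / f x))).
    + intro; rewrite Derive_inv; auto. field; auto.
    + assert (Hinv : Cn n (fun x => / f x)) by (apply IH; auto; apply Cn_S; simpl; auto).
      apply Cn_mult; [apply Cn_mult; auto; apply Cn_const | apply Cn_mult; auto].
Qed.

Lemma Cn_sqrt n : forall f, (forall x, 0 < f x) -> Cn n f -> Cn n (fun x => sqrt (f x)).
Proof.
  induction n as [|n IH]; simpl; auto.
  intros f Hf0 [Hf Hf']. split.
  - intro x. eexists. apply is_derive_sqrt; auto. apply Derive_correct; auto.
  - apply (Cn_ext n (fun x => Derive f x * (/ 2 * / sqrt (f x)))).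
    + intro x. erewrite (is_derive_unique (fun x => sqrt (f x))); [|auto_derive; auto].
      eta_Derive. field. apply Rgt_not_eq, sqrt_lt_R0; auto.
    + apply Cn_mult; auto. apply Cn_mult; [apply Cn_const|].
      apply Cn_inv; [intro x; apply Rgt_not_eq, sqrt_lt_R0; auto|].
      apply IH; auto. apply Cn_S; simpl; auto.
Qed.

Lemma Derive_cos_comp (f : R -> R) x :
  ex_derive f x -> Derive (fun y => cos (f y)) x = - sin (f x) * Derive f x.
Proof. intro Hf. erewrite is_derive_unique; [|auto_derive; auto]. eta_Derive. ring. Qed.

Lemma Derive_sin_comp (f : R -> R) x :
  ex_derive f x -> Derive (fun y => sin (f y)) x = cos (f x) * Derive f x.
Proof. intro Hf. erewrite is_derive_unique; [|auto_derive; auto]. eta_Derive. ring. Qed.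

Lemma Cn_sin_cos n : forall f, Cn n f -> Cn n (fun x => sin (f x)) /\ Cn n (fun x => cos (f x)).
Proof.
  induction n as [|n IH]; simpl; auto.
  intros f [Hf Hf'].
  destruct (IH f (Cn_S n f (conj Hf Hf'))) as [Hsin Hcos].
  split; split.
  - intro x; auto_derive; auto.
  - apply (Cn_ext n (fun x => Derive f x * cos (f x))); [|apply Cn_mult; auto].
    intro x. rewrite Derive_sin_comp by auto. ring.
  - intro x; auto_derive; auto.
  - apply (Cn_ext n (fun x => (-1 * Derive f x) * sin (f x))).
    + intro x. rewrite Derive_cos_comp by auto. ring.
    + apply Cn_mult; auto. apply Cn_mult; auto. apply Cn_const.
Qed.

Lemma ex_derive_Cinf f x : Cinf f -> ex_derive f x.
Proof. intro Hf. exact (proj1 (Hf 1%nat) x). Qed.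

Lemma Cinf_Derive f : Cinf f -> Cinf (Derive f).
Proof. intros Hf n. exact (proj2 (Hf (S n))). Qed.

Lemma Cinf_plus f g : Cinf f -> Cinf g -> Cinf (fun x => f x + g x).
Proof. intros Hf Hg n; apply Cn_plus; auto. Qed.

Lemma Cinf_mult f g : Cinf f -> Cinf g -> Cinf (fun x => f x * g x).
Proof. intros Hf Hg n; apply Cn_mult; auto. Qed.

Lemma Cinf_minus f g : Cinf f -> Cinf g -> Cinf (fun x => f x - g x).
Proof.
  intros Hf Hg n.
  apply (Cn_ext n (fun x => f x + (-1) * g x)); [intro; ring|].
  apply Cn_plus; auto. apply Cn_mult; auto. apply Cn_const.
Qed.

Lemma Cinf_inv f : (forall x, f x <> 0) -> Cinf f -> Cinf (fun x => / f x).
Proof. intros Hf0 Hf n; apply Cn_inv; auto. Qed.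

Lemma Cinf_sqrt f : (forall x, 0 < f x) -> Cinf f -> Cinf (fun x => sqrt (f x)).
Proof. intros Hf0 Hf n; apply Cn_sqrt; auto. Qed.

Lemma Cinf_sin f : Cinf f -> Cinf (fun x => sin (f x)).
Proof. intros Hf n; apply Cn_sin_cos; auto. Qed.

Lemma Cinf_cos f : Cinf f -> Cinf (fun x => cos (f x)).
Proof. intros Hf n; apply Cn_sin_cos; auto. Qed.

Lemma Derive_inv_mult (g h : R -> R) x : ex_derive g x -> ex_derive h x -> g x <> 0 ->
  Derive (fun y => / g y * h y) x = - Derive g x / g x ^ 2 * h x + / g x * Derive h x.
Proof. intros. erewrite is_derive_unique; [|auto_derive; tauto]. eta_Derive. field. auto. Qed.

Lemma sqrt_gt0_inv x : 0 < sqrt x -> 0 < x.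
Proof.
  intro Hx. destruct (Rle_or_lt x 0) as [Hle|Hlt]; auto.
  rewrite sqrt_neg_0 in Hx; lra.
Qed.

(** * Vectors in R^3 *)

Lemma V3_ext (a b : V3) : vx a = vx b -> vy a = vy b -> vz a = vz b -> a = b.
Proof.
  destruct a as [[a1 a2] a3], b as [[b1 b2] b3]; unfold vx, vy, vz; simpl.
  intros; subst; reflexivity.
Qed.

Ltac vunf := unfold dot, cross, vadd, vscal, mkV, vx, vy, vz in *; simpl in *.

Lemma dot_comm a b : dot a b = dot b a.
Proof. vunf; ring. Qed.

Lemma dot_addl a b c : dot (vadd a b) c = dot a c + dot b c.
Proof. vunf; ring. Qed.

Lemma dot_addr a b c : dot c (vadd a b) = dot c a + dot c b.
Proof. vunf; ring. Qed.

Lemma dot_scall k a c : dot (vscal k a) c = k * dot a c.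
Proof. vunf; ring. Qed.

Lemma dot_scalr k a c : dot c (vscal k a) = k * dot c a.
Proof. vunf; ring. Qed.

Lemma dot_0l a : dot (mkV 0 0 0) a = 0.
Proof. vunf; ring. Qed.

Lemma cross_addr a b c : cross c (vadd a b) = vadd (cross c a) (cross c b).
Proof. apply V3_ext; vunf; ring. Qed.

Lemma cross_scall k a c : cross (vscal k a) c = vscal k (cross a c).
Proof. apply V3_ext; vunf; ring. Qed.

Lemma cross_scalr k a c : cross c (vscal k a) = vscal k (cross c a).
Proof. apply V3_ext; vunf; ring. Qed.

Lemma cross_self a : cross a a = mkV 0 0 0.
Proof. apply V3_ext; vunf; ring. Qed.

Lemma dot_cross_l a b : dot (cross a b) a = 0.
Proof. vunf; ring. Qed.

Lemma dot_cross_r a b : dot (cross a b) b = 0.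
Proof. vunf; ring. Qed.

Lemma dot_cross_swap a x b : dot (cross a x) b = - dot x (cross a b).
Proof. vunf; ring. Qed.

Lemma dot_cross_cross a b c d :
  dot (cross a b) (cross c d) = dot a c * dot b d - dot a d * dot b c.
Proof. vunf; ring. Qed.

Lemma cross_cross a b c : cross a (cross b c) = vadd (vscal (dot a c) b) (vscal (- dot a b) c).
Proof. apply V3_ext; vunf; ring. Qed.

Lemma orthonormal_decomp T N v : dot T T = 1 -> dot N N = 1 -> dot T N = 0 ->
  v = vadd (vadd (vscal (dot v T) T) (vscal (dot v N) N))
           (vscal (dot v (cross T N)) (cross T N)).
Proof.
  intros HT HN HTN.
  assert (E : forall a b w, vscal (dot w (cross a b)) (cross a b) =
    vadd (vscal (dot (cross a b) (cross a b)) w)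
      (vadd (vadd (vscal (dot a w * dot a b) b) (vscal (- dot a w * dot b b) a))
            (vadd (vscal (- dot b w * dot a a) b) (vscal (dot b w * dot a b) a)))).
  { intros; apply V3_ext; vunf; ring. }
  rewrite E, dot_cross_cross, HT, HN, HTN, (dot_comm N T), HTN.
  apply V3_ext; vunf; ring.
Qed.

Definition normalize (v : V3) : V3 := vscal (/ vnorm v) v.

Lemma dot_normalize_self v : 0 < vnorm v -> dot (normalize v) (normalize v) = 1.
Proof.
  intro Hv. unfold normalize. rewrite dot_scall, dot_scalr.
  unfold vnorm in *. assert (Hd := sqrt_gt0_inv _ Hv).
  rewrite <- (sqrt_sqrt (dot v v)) at 3 by lra.
  field. lra.
Qed.

(* The curvature vector d_s T of a curve with gamma_u = a and gamma_uu = b: the part of b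
   orthogonal to a, divided by |a|^2. *)
Definition curv_vec (a b : V3) : V3 :=
  vscal (/ dot a a) (vadd b (vscal (- (dot a b / dot a a)) a)).

Definition rotate (c : R) (N B : V3) : V3 := vadd (vscal (cos c) N) (vscal (sin c) B).

Lemma dot_curv_vec_orth a b w : dot a w = 0 -> dot b w = 0 -> dot (curv_vec a b) w = 0.
Proof.
  intros Ha Hb. unfold curv_vec. rewrite dot_scall, dot_addl, dot_scall, Ha, Hb. ring.
Qed.

(** * Derivatives of vector-valued functions *)

Definition ex_Dv (f : R -> V3) (x : R) : Prop :=
  ex_derive (fun y => vx (f y)) x /\ ex_derive (fun y => vy (f y)) x /\
  ex_derive (fun y => vz (f y)) x.

Definition CinfV (f : R -> V3) : Prop :=
  Cinf (fun x => vx (f x)) /\ Cinf (fun x => vy (f x)) /\ Cinf (fun x => vz (f x)).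

(* Stated for abstract functions: [auto_derive] cannot differentiate through the
   components [vx (f y)] of a vector-valued [f]. *)
Lemma ex_derive_Rplus (a b : R -> R) x :
  ex_derive a x -> ex_derive b x -> ex_derive (fun y => a y + b y) x.
Proof. intros; auto_derive; tauto. Qed.

Lemma ex_derive_opp_div (p q : R -> R) x :
  ex_derive p x -> ex_derive q x -> q x <> 0 -> ex_derive (fun y => - (p y / q y)) x.
Proof. intros; auto_derive; tauto. Qed.

Lemma ex_derive_sqrt_comp (h : R -> R) x :
  ex_derive h x -> 0 < h x -> ex_derive (fun y => sqrt (h y)) x.
Proof. intros; auto_derive; auto. Qed.

Lemma ex_derive_mult_minus (a b c d : R -> R) x :
  ex_derive a x -> ex_derive b x -> ex_derive c x -> ex_derive d x ->
  ex_derive (fun y => a y * b y - c y * d y) x.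
Proof. intros; auto_derive; tauto. Qed.

Lemma Derive_mult_minus (a b c d : R -> R) x :
  ex_derive a x -> ex_derive b x -> ex_derive c x -> ex_derive d x ->
  Derive (fun y => a y * b y - c y * d y) x =
  (Derive a x * b x + a x * Derive b x) - (Derive c x * d x + c x * Derive d x).
Proof. intros; erewrite is_derive_unique; [|auto_derive; tauto]. eta_Derive; ring. Qed.

Lemma ex_derive_dot3 (a1 a2 a3 b1 b2 b3 : R -> R) x :
  ex_derive a1 x -> ex_derive a2 x -> ex_derive a3 x ->
  ex_derive b1 x -> ex_derive b2 x -> ex_derive b3 x ->
  ex_derive (fun y => a1 y * b1 y + a2 y * b2 y + a3 y * b3 y) x.
Proof. intros; auto_derive; tauto. Qed.

Lemma Derive_dot3 (a1 a2 a3 b1 b2 b3 : R -> R) x :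
  ex_derive a1 x -> ex_derive a2 x -> ex_derive a3 x ->
  ex_derive b1 x -> ex_derive b2 x -> ex_derive b3 x ->
  Derive (fun y => a1 y * b1 y + a2 y * b2 y + a3 y * b3 y) x =
  (Derive a1 x * b1 x + Derive a2 x * b2 x + Derive a3 x * b3 x) +
  (a1 x * Derive b1 x + a2 x * Derive b2 x + a3 x * Derive b3 x).
Proof. intros; erewrite is_derive_unique; [|auto_derive; tauto]. eta_Derive; ring. Qed.

Lemma ex_Dv_vadd f g x : ex_Dv f x -> ex_Dv g x -> ex_Dv (fun y => vadd (f y) (g y)) x.
Proof. intros [F1 [F2 F3]] [G1 [G2 G3]]; repeat split; apply ex_derive_Rplus; auto. Qed.

Lemma ex_Dv_vscal a f x : ex_derive a x -> ex_Dv f x -> ex_Dv (fun y => vscal (a y) (f y)) x.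
Proof. intros A [F1 [F2 F3]]; repeat split; apply ex_derive_mult; auto. Qed.

Lemma ex_Dv_cross f g x : ex_Dv f x -> ex_Dv g x -> ex_Dv (fun y => cross (f y) (g y)) x.
Proof. intros [F1 [F2 F3]] [G1 [G2 G3]]; repeat split; apply ex_derive_mult_minus; auto. Qed.

Lemma ex_derive_dot f g x : ex_Dv f x -> ex_Dv g x -> ex_derive (fun y => dot (f y) (g y)) x.
Proof. intros [F1 [F2 F3]] [G1 [G2 G3]]; apply ex_derive_dot3; auto. Qed.

Lemma Dv_vadd f g x : ex_Dv f x -> ex_Dv g x ->
  Dv (fun y => vadd (f y) (g y)) x = vadd (Dv f x) (Dv g x).
Proof. intros [F1 [F2 F3]] [G1 [G2 G3]]; apply V3_ext; apply Derive_plus; auto. Qed.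

Lemma Dv_vscal a f x : ex_derive a x -> ex_Dv f x ->
  Dv (fun y => vscal (a y) (f y)) x = vadd (vscal (Derive a x) (f x)) (vscal (a x) (Dv f x)).
Proof. intros A [F1 [F2 F3]]; apply V3_ext; apply Derive_mult; auto. Qed.

Lemma Dv_cross f g x : ex_Dv f x -> ex_Dv g x ->
  Dv (fun y => cross (f y) (g y)) x = vadd (cross (Dv f x) (g x)) (cross (f x) (Dv g x)).
Proof.
  intros [F1 [F2 F3]] [G1 [G2 G3]]; apply V3_ext;
    (etransitivity; [apply Derive_mult_minus; auto | unfold Dv; vunf; ring]).
Qed.

Lemma Derive_dot f g x : ex_Dv f x -> ex_Dv g x ->
  Derive (fun y => dot (f y) (g y)) x = dot (Dv f x) (g x) + dot (f x) (Dv g x).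
Proof.
  intros [F1 [F2 F3]] [G1 [G2 G3]].
  etransitivity; [apply Derive_dot3; auto | unfold Dv; vunf; ring].
Qed.

Lemma CinfV_vadd f g : CinfV f -> CinfV g -> CinfV (fun x => vadd (f x) (g x)).
Proof. intros [F1 [F2 F3]] [G1 [G2 G3]]; repeat split; apply Cinf_plus; auto. Qed.

Lemma CinfV_vscal a f : Cinf a -> CinfV f -> CinfV (fun x => vscal (a x) (f x)).
Proof. intros A [F1 [F2 F3]]; repeat split; apply Cinf_mult; auto. Qed.

Lemma CinfV_cross f g : CinfV f -> CinfV g -> CinfV (fun x => cross (f x) (g x)).
Proof.
  intros [F1 [F2 F3]] [G1 [G2 G3]]; repeat split; apply Cinf_minus; apply Cinf_mult; auto.
Qed.

Lemma Cinf_dot f g : CinfV f -> CinfV g -> Cinf (fun x => dot (f x) (g x)).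
Proof.
  intros [F1 [F2 F3]] [G1 [G2 G3]]; unfold dot; repeat apply Cinf_plus; apply Cinf_mult; auto.
Qed.

Lemma CinfV_Dv f : CinfV f -> CinfV (Dv f).
Proof. intros [F1 [F2 F3]]; repeat split; apply Cinf_Derive; auto. Qed.

Lemma ex_Dv_CinfV f x : CinfV f -> ex_Dv f x.
Proof. intros [F1 [F2 F3]]; repeat split; apply ex_derive_Cinf; auto. Qed.

Lemma Dv_ext_loc f g x : locally x (fun y => f y = g y) -> Dv f x = Dv g x.
Proof.
  intro H. unfold Dv. f_equal; apply Derive_ext_loc;
    apply (filter_imp (fun y => f y = g y)); auto; intros y E; rewrite E; auto.
Qed.

Lemma dot_Dv_self_loc f x c : ex_Dv f x -> locally x (fun y => dot (f y) (f y) = c) ->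
  dot (Dv f x) (f x) = 0.
Proof.
  intros F E. enough (Hsum : dot (Dv f x) (f x) + dot (f x) (Dv f x) = 0)
    by (rewrite (dot_comm (f x)) in Hsum; lra).
  rewrite <- Derive_dot; auto.
  rewrite (Derive_ext_loc _ (fun _ => c)) by auto. apply Derive_const.
Qed.

Lemma dot_Dv_orth_loc f g x : ex_Dv f x -> ex_Dv g x ->
  locally x (fun y => dot (f y) (g y) = 0) ->
  dot (f x) (Dv g x) = - dot (Dv f x) (g x).
Proof.
  intros F G E. enough (Hsum : dot (Dv f x) (g x) + dot (f x) (Dv g x) = 0) by lra.
  rewrite <- Derive_dot; auto.
  rewrite (Derive_ext_loc _ (fun _ => 0)) by auto. apply Derive_const.
Qed.

Lemma ex_derive_vnorm v x : ex_Dv v x -> 0 < vnorm (v x) ->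
  ex_derive (fun y => vnorm (v y)) x.
Proof.
  intros Hv Hpos. unfold vnorm in *.
  apply (ex_derive_sqrt_comp (fun y => dot (v y) (v y))).
  - apply ex_derive_dot; auto.
  - apply sqrt_gt0_inv; auto.
Qed.

Lemma ex_Dv_normalize v x : ex_Dv v x -> 0 < vnorm (v x) ->
  ex_Dv (fun y => normalize (v y)) x.
Proof.
  intros Hv Hpos. apply ex_Dv_vscal; auto.
  apply ex_derive_inv; [apply ex_derive_vnorm|]; auto with real.
Qed.

Lemma dot_Dv_normalize v w x : ex_Dv v x -> 0 < vnorm (v x) -> dot (v x) w = 0 ->
  dot (Dv (fun y => normalize (v y)) x) w = / vnorm (v x) * dot (Dv v x) w.
Proof.
  intros Hv Hpos Hvw.
  assert (Hinv : ex_derive (fun y => / vnorm (v y)) x)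
    by (apply ex_derive_inv; [apply ex_derive_vnorm|]; auto with real).
  unfold normalize. rewrite Dv_vscal by auto. rewrite dot_addl, !dot_scall, Hvw. ring.
Qed.

Lemma ex_Dv_curv_vec a b x : ex_Dv a x -> ex_Dv b x -> 0 < dot (a x) (a x) ->
  ex_Dv (fun y => curv_vec (a y) (b y)) x.
Proof.
  intros Ha Hb Hpos.
  assert (Hinv : ex_derive (fun y => / dot (a y) (a y)) x)
    by (apply ex_derive_inv; [apply ex_derive_dot|]; auto with real).
  unfold curv_vec. apply ex_Dv_vscal, ex_Dv_vadd, ex_Dv_vscal; auto.
  apply (ex_derive_opp_div (fun y => dot (a y) (b y))); auto with real;
    apply ex_derive_dot; auto.
Qed.

Lemma dot_Dv_curv_vec a b w x : ex_Dv a x -> ex_Dv b x -> 0 < dot (a x) (a x) ->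
  dot (a x) w = 0 -> dot (b x) w = 0 ->
  dot (Dv (fun y => curv_vec (a y) (b y)) x) w =
  / dot (a x) (a x) * (dot (Dv b x) w - dot (a x) (b x) / dot (a x) (a x) * dot (Dv a x) w).
Proof.
  intros Ha Hb Hpos Haw Hbw.
  assert (Hinv : ex_derive (fun y => / dot (a y) (a y)) x)
    by (apply ex_derive_inv; [apply ex_derive_dot|]; auto with real).
  assert (Hcoef : ex_derive (fun y => - (dot (a y) (b y) / dot (a y) (a y))) x)
    by (apply (ex_derive_opp_div (fun y => dot (a y) (b y))); auto with real;
        apply ex_derive_dot; auto).
  unfold curv_vec.
  rewrite Dv_vscal, Dv_vadd, Dv_vscal; auto.
  - rewrite !dot_addl, !dot_scall, !dot_addl, !dot_scall, Haw, Hbw. unfold Rdiv. ring.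
  - apply ex_Dv_vscal; auto.
  - apply ex_Dv_vadd, ex_Dv_vscal; auto.
Qed.

Lemma ex_Dv_rotate (N B : R -> V3) (c : R -> R) x :
  ex_Dv N x -> ex_Dv B x -> ex_derive c x -> ex_Dv (fun y => rotate (c y) (N y) (B y)) x.
Proof.
  intros HN HB Hc.
  apply ex_Dv_vadd; apply ex_Dv_vscal; auto; auto_derive; auto.
Qed.

(* The cross terms cancel because N' . N = B' . B = 0 and B' . N = - N' . B. *)
Lemma dot_Dv_rotate (N B : R -> V3) (c : R -> R) x :
  ex_Dv N x -> ex_Dv B x -> ex_derive c x ->
  locally x (fun y => dot (N y) (N y) = 1) ->
  locally x (fun y => dot (B y) (B y) = 1) ->
  locally x (fun y => dot (N y) (B y) = 0) ->
  dot (Dv (fun y => rotate (c y) (N y) (B y)) x) (rotate (c x) (B x) (vscal (-1) (N x))) =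
  Derive c x + dot (Dv N x) (B x).
Proof.
  intros HN HB Hc NN BB NB.
  assert (DNN := dot_Dv_self_loc N x 1 HN NN).
  assert (DBB := dot_Dv_self_loc B x 1 HB BB).
  assert (DNB := dot_Dv_orth_loc N B x HN HB NB).
  apply locally_singleton in NN, BB, NB.
  assert (Hcos : ex_derive (fun y => cos (c y)) x) by (auto_derive; auto).
  assert (Hsin : ex_derive (fun y => sin (c y)) x) by (auto_derive; auto).
  unfold rotate.
  rewrite Dv_vadd by (apply ex_Dv_vscal; auto).
  rewrite !Dv_vscal, Derive_cos_comp, Derive_sin_comp by auto.
  repeat (rewrite dot_addl || rewrite dot_scall || rewrite dot_addr || rewrite dot_scalr).
  rewrite (dot_comm (B x) (N x)), (dot_comm (Dv B x) (N x)), DNB, DNN, DBB, NN, BB, NB.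
  transitivity ((sin (c x) ^ 2 + cos (c x) ^ 2) * (Derive c x + dot (Dv N x) (B x))); [ring|].
  rewrite <- !Rsqr_pow2, sin2_cos2. ring.
Qed.

(** * The Frenet frame of a regular curve *)

Definition frenet_regular (gam : R -> R -> V3) (t : R) : Prop :=
  CinfV (gam t) /\ (forall u, 0 < gmet gam t u) /\ (forall u, 0 < kappa gam t u).

Definition flow_velocity (gam : R -> R -> V3) (th : R -> R -> R) (t u : R) : V3 :=
  vscal (kappa gam t u) (nu gam th t u).

Section Frenet.

Variables (gam : R -> R -> V3) (t : R).
Hypothesis reg : frenet_regular gam t.

Let gam_smooth : CinfV (gam t) := proj1 reg.
Let gmet_pos : forall u, 0 < gmet gam t u := proj1 (proj2 reg).
Let kappa_pos : forall u, 0 < kappa gam t u := proj2 (proj2 reg).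

Lemma Cinf_gmet : Cinf (gmet gam t).
Proof.
  unfold gmet, vnorm. apply Cinf_sqrt.
  - intro u. apply sqrt_gt0_inv, gmet_pos.
  - apply Cinf_dot; apply CinfV_Dv, gam_smooth.
Qed.

Lemma CinfV_dsV F : CinfV F -> CinfV (dsV gam t F).
Proof.
  intro HF. unfold dsV. apply CinfV_vscal; [|apply CinfV_Dv; auto].
  apply Cinf_inv; [intro u; apply Rgt_not_eq, gmet_pos | apply Cinf_gmet].
Qed.

Lemma CinfV_Tan : CinfV (Tan gam t).
Proof. exact (CinfV_dsV (gam t) gam_smooth). Qed.

Lemma Cinf_kappa : Cinf (kappa gam t).
Proof.
  unfold kappa, vnorm. apply Cinf_sqrt.
  - intro u. apply sqrt_gt0_inv, kappa_pos.
  - apply Cinf_dot; apply CinfV_dsV, CinfV_Tan.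
Qed.

Lemma CinfV_Nor : CinfV (Nor gam t).
Proof.
  unfold Nor. apply CinfV_vscal; [|apply CinfV_dsV, CinfV_Tan].
  apply Cinf_inv; [intro u; apply Rgt_not_eq, kappa_pos | apply Cinf_kappa].
Qed.

Lemma CinfV_Bin : CinfV (Bin gam t).
Proof. unfold Bin. apply CinfV_cross; [apply CinfV_Tan | apply CinfV_Nor]. Qed.

Lemma Cinf_tors : Cinf (tors gam t).
Proof. unfold tors. apply Cinf_dot; [apply CinfV_dsV, CinfV_Nor | apply CinfV_Bin]. Qed.

Lemma dot_Tan_Tan u : dot (Tan gam t u) (Tan gam t u) = 1.
Proof. exact (dot_normalize_self _ (gmet_pos u)). Qed.

Lemma dot_Nor_Nor u : dot (Nor gam t u) (Nor gam t u) = 1.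
Proof. exact (dot_normalize_self _ (kappa_pos u)). Qed.

Lemma Dv_Tan u : Dv (Tan gam t) u = vscal (gmet gam t u * kappa gam t u) (Nor gam t u).
Proof.
  assert (Hg := gmet_pos u). assert (Hk := kappa_pos u).
  unfold Nor, dsV. apply V3_ext; vunf; field; lra.
Qed.

Lemma dot_Tan_Nor u : dot (Tan gam t u) (Nor gam t u) = 0.
Proof.
  assert (H := dot_Dv_self_loc (Tan gam t) u 1 (ex_Dv_CinfV _ u CinfV_Tan)
                 (filter_forall _ dot_Tan_Tan)).
  rewrite Dv_Tan, dot_scall, dot_comm in H.
  assert (0 < gmet gam t u * kappa gam t u) by (apply Rmult_lt_0_compat; auto).
  nra.
Qed.

Lemma dot_Tan_Bin u : dot (Tan gam t u) (Bin gam t u) = 0.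
Proof. unfold Bin. rewrite dot_comm. apply dot_cross_l. Qed.

Lemma dot_Nor_Bin u : dot (Nor gam t u) (Bin gam t u) = 0.
Proof. unfold Bin. rewrite dot_comm. apply dot_cross_r. Qed.

Lemma dot_Bin_Bin u : dot (Bin gam t u) (Bin gam t u) = 1.
Proof.
  unfold Bin.
  rewrite dot_cross_cross, dot_Tan_Tan, dot_Nor_Nor, (dot_comm (Nor gam t u)), dot_Tan_Nor.
  ring.
Qed.

Lemma dot_DNor_Nor u : dot (Dv (Nor gam t) u) (Nor gam t u) = 0.
Proof.
  exact (dot_Dv_self_loc _ u 1 (ex_Dv_CinfV _ u CinfV_Nor) (filter_forall _ dot_Nor_Nor)).
Qed.

Lemma dot_DNor_Bin u : dot (Dv (Nor gam t) u) (Bin gam t u) = gmet gam t u * tors gam t u.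
Proof.
  assert (Hg := gmet_pos u). unfold tors, dsV. rewrite dot_scall. field. lra.
Qed.

(* The Frenet equation d_s B = - tau N, written with d_u = g d_s. *)
Lemma Dv_Bin u : Dv (Bin gam t) u = vscal (- (gmet gam t u * tors gam t u)) (Nor gam t u).
Proof.
  unfold Bin at 1.
  rewrite Dv_cross by (apply ex_Dv_CinfV; first [apply CinfV_Tan | apply CinfV_Nor]).
  rewrite Dv_Tan, cross_scall, cross_self.
  set (w := vadd _ _).
  rewrite (orthonormal_decomp (Tan gam t u) (Nor gam t u) w);
    [|apply dot_Tan_Tan | apply dot_Nor_Nor | apply dot_Tan_Nor].
  fold (Bin gam t u).
  assert (E1 : dot w (Tan gam t u) = 0).
  { unfold w. rewrite dot_addl, dot_scall, dot_0l, dot_cross_l. ring. }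
  assert (E2 : dot w (Nor gam t u) = - (gmet gam t u * tors gam t u)).
  { unfold w. rewrite dot_addl, dot_scall, dot_0l, dot_cross_swap.
    fold (Bin gam t u). rewrite dot_DNor_Bin. ring. }
  assert (E3 : dot w (Bin gam t u) = 0).
  { unfold w. rewrite dot_addl, dot_scall, dot_0l. unfold Bin.
    rewrite dot_cross_cross, dot_Tan_Tan, dot_Tan_Nor, dot_DNor_Nor. ring. }
  rewrite E1, E2, E3. apply V3_ext; vunf; ring.
Qed.

Lemma Dv_gam u : Dv (gam t) u = vscal (gmet gam t u) (Tan gam t u).
Proof. assert (Hg := gmet_pos u). unfold Tan. apply V3_ext; vunf; field; lra. Qed.

Lemma Dv2_gam u :
  Dv (Dv (gam t)) u = vadd (vscal (Derive (gmet gam t) u) (Tan gam t u))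
                           (vscal (gmet gam t u ^ 2 * kappa gam t u) (Nor gam t u)).
Proof.
  rewrite (Dv_ext_loc _ (fun y => vscal (gmet gam t y) (Tan gam t y)))
    by (apply filter_forall; exact Dv_gam).
  rewrite Dv_vscal by (apply ex_derive_Cinf, Cinf_gmet || apply ex_Dv_CinfV, CinfV_Tan).
  rewrite Dv_Tan. apply V3_ext; vunf; ring.
Qed.

Lemma dot_Dv_gam_Bin u : dot (Dv (gam t) u) (Bin gam t u) = 0.
Proof. rewrite Dv_gam, dot_scall, dot_Tan_Bin. ring. Qed.

Lemma dot_Dv2_gam_Bin u : dot (Dv (Dv (gam t)) u) (Bin gam t u) = 0.
Proof. rewrite Dv2_gam, dot_addl, !dot_scall, dot_Tan_Bin, dot_Nor_Bin. ring. Qed.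

Lemma dot_Dv_gam_Dv_gam u : dot (Dv (gam t) u) (Dv (gam t) u) = gmet gam t u ^ 2.
Proof. rewrite Dv_gam, dot_scall, dot_scalr, dot_Tan_Tan. ring. Qed.

Lemma dot_Dv_gam_Dv2_gam u :
  dot (Dv (gam t) u) (Dv (Dv (gam t)) u) = gmet gam t u * Derive (gmet gam t) u.
Proof.
  rewrite Dv_gam, Dv2_gam, dot_scall, dot_addr, !dot_scalr, dot_Tan_Tan, dot_Tan_Nor. ring.
Qed.

Lemma dsV_Tan_curv_vec u : dsV gam t (Tan gam t) u = curv_vec (Dv (gam t) u) (Dv (Dv (gam t)) u).
Proof.
  assert (Hg := gmet_pos u).
  assert (Hinv : ex_derive (fun y => / gmet gam t y) u)
    by (apply ex_derive_inv; [apply ex_derive_Cinf, Cinf_gmet | lra]).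
  unfold curv_vec. rewrite dot_Dv_gam_Dv_gam, dot_Dv_gam_Dv2_gam.
  unfold dsV, Tan.
  rewrite Dv_vscal by (auto; apply ex_Dv_CinfV, CinfV_Dv, gam_smooth).
  rewrite Derive_inv by (apply ex_derive_Cinf, Cinf_gmet || lra).
  apply V3_ext; vunf; field; lra.
Qed.

Variable th : R -> R -> R.
Hypothesis th_smooth : Cinf (th t).

Lemma CinfV_nu : CinfV (nu gam th t).
Proof.
  unfold nu. apply CinfV_vadd; apply CinfV_vscal;
    auto using Cinf_cos, Cinf_sin, CinfV_Nor, CinfV_Bin.
Qed.

Lemma beta_rotate u :
  beta gam th t u = rotate (th t u) (Bin gam t u) (vscal (-1) (Nor gam t u)).
Proof.
  unfold beta, nu. rewrite cross_addr, !cross_scalr. fold (Bin gam t u).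
  unfold Bin at 2. rewrite cross_cross, dot_Tan_Tan, dot_Tan_Nor.
  unfold rotate. apply V3_ext; vunf; ring.
Qed.

Lemma dot_nu_Nor u : dot (nu gam th t u) (Nor gam t u) = cos (th t u).
Proof.
  unfold nu. rewrite dot_addl, !dot_scall, dot_Nor_Nor, (dot_comm (Bin _ _ _)), dot_Nor_Bin.
  ring.
Qed.

Lemma dot_nu_Bin u : dot (nu gam th t u) (Bin gam t u) = sin (th t u).
Proof. unfold nu. rewrite dot_addl, !dot_scall, dot_Nor_Bin, dot_Bin_Bin. ring. Qed.

Lemma dot_Tan_nu u : dot (Tan gam t u) (nu gam th t u) = 0.
Proof. unfold nu. rewrite dot_addr, !dot_scalr, dot_Tan_Nor, dot_Tan_Bin. ring. Qed.

Lemma dot_nu_nu u : dot (nu gam th t u) (nu gam th t u) = 1.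
Proof.
  unfold nu at 2. rewrite dot_addr, !dot_scalr, dot_nu_Nor, dot_nu_Bin.
  rewrite <- (sin2_cos2 (th t u)). unfold Rsqr. ring.
Qed.

Lemma dot_nu_beta u : dot (nu gam th t u) (beta gam th t u) = 0.
Proof.
  rewrite beta_rotate. unfold rotate.
  rewrite dot_addr, !dot_scalr, dot_nu_Nor, dot_nu_Bin. ring.
Qed.

Lemma dot_Tan_beta u : dot (Tan gam t u) (beta gam th t u) = 0.
Proof.
  rewrite beta_rotate. unfold rotate.
  rewrite dot_addr, !dot_scalr, dot_Tan_Nor, dot_Tan_Bin. ring.
Qed.

Lemma dot_Nor_beta u : dot (Nor gam t u) (beta gam th t u) = - sin (th t u).
Proof.
  rewrite beta_rotate. unfold rotate.
  rewrite dot_addr, !dot_scalr, dot_Nor_Nor, dot_Nor_Bin. ring.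
Qed.

Lemma Dv_nu u :
  Dv (nu gam th t) u =
  vadd (vadd (vscal (- sin (th t u) * Derive (th t) u) (Nor gam t u))
             (vscal (cos (th t u)) (Dv (Nor gam t) u)))
       (vadd (vscal (cos (th t u) * Derive (th t) u) (Bin gam t u))
             (vscal (sin (th t u)) (vscal (- (gmet gam t u * tors gam t u)) (Nor gam t u)))).
Proof.
  assert (Hth : ex_derive (th t) u) by (apply ex_derive_Cinf; auto).
  assert (HN := ex_Dv_CinfV _ u CinfV_Nor).
  assert (HB := ex_Dv_CinfV _ u CinfV_Bin).
  assert (Hcos : ex_derive (fun y => cos (th t y)) u) by (auto_derive; auto).
  assert (Hsin : ex_derive (fun y => sin (th t y)) u) by (auto_derive; auto).
  unfold nu at 1.
  rewrite Dv_vadd by (apply ex_Dv_vscal; auto).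
  rewrite !Dv_vscal, Derive_cos_comp, Derive_sin_comp, Dv_Bin by auto.
  reflexivity.
Qed.

Lemma CinfV_flow_velocity : CinfV (flow_velocity gam th t).
Proof. apply CinfV_vscal; [apply Cinf_kappa | apply CinfV_nu]. Qed.

Lemma Dv_flow_velocity u :
  Dv (flow_velocity gam th t) u =
  vadd (vscal (Derive (kappa gam t) u) (nu gam th t u))
       (vscal (kappa gam t u) (Dv (nu gam th t) u)).
Proof. apply Dv_vscal; [apply ex_derive_Cinf, Cinf_kappa | apply ex_Dv_CinfV, CinfV_nu]. Qed.

Lemma dot_Dv_flow_velocity_Bin u :
  dot (Dv (flow_velocity gam th t) u) (Bin gam t u) =
  Derive (kappa gam t) u * sin (th t u) + kappa gam t u * cos (th t u) * Derive (th t) u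
  + kappa gam t u * cos (th t u) * gmet gam t u * tors gam t u.
Proof.
  rewrite Dv_flow_velocity, Dv_nu.
  repeat (rewrite dot_addl || rewrite dot_scall).
  rewrite dot_nu_Bin, dot_Nor_Bin, dot_DNor_Bin, dot_Bin_Bin. ring.
Qed.

Lemma dot_Dv_flow_velocity_Nor u :
  dot (Dv (flow_velocity gam th t) u) (Nor gam t u) =
  Derive (kappa gam t) u * cos (th t u) - kappa gam t u * sin (th t u) * Derive (th t) u
  - kappa gam t u * sin (th t u) * gmet gam t u * tors gam t u.
Proof.
  rewrite Dv_flow_velocity, Dv_nu.
  repeat (rewrite dot_addl || rewrite dot_scall).
  rewrite dot_nu_Nor, dot_Nor_Nor, dot_DNor_Nor, (dot_comm (Bin _ _ _)), dot_Nor_Bin. ring.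
Qed.

Lemma dot_Dv2_flow_velocity_Bin u :
  dot (Dv (Dv (flow_velocity gam th t)) u) (Bin gam t u) =
  Derive (Derive (kappa gam t)) u * sin (th t u)
  + 2 * Derive (kappa gam t) u * cos (th t u) * Derive (th t) u
  - kappa gam t u * sin (th t u) * Derive (th t) u ^ 2
  + kappa gam t u * cos (th t u) * Derive (Derive (th t)) u
  + 2 * Derive (kappa gam t) u * cos (th t u) * gmet gam t u * tors gam t u
  - 2 * kappa gam t u * sin (th t u) * Derive (th t) u * gmet gam t u * tors gam t u
  + kappa gam t u * cos (th t u) * Derive (gmet gam t) u * tors gam t u
  + kappa gam t u * cos (th t u) * gmet gam t u * Derive (tors gam t) u
  - kappa gam t u * sin (th t u) * (gmet gam t u * tors gam t u) ^ 2.
Proof.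
  assert (E := Derive_dot (Dv (flow_velocity gam th t)) (Bin gam t) u
     (ex_Dv_CinfV _ u (CinfV_Dv _ CinfV_flow_velocity)) (ex_Dv_CinfV _ u CinfV_Bin)).
  rewrite (Derive_ext _ _ _ dot_Dv_flow_velocity_Bin), Dv_Bin, dot_scalr,
    dot_Dv_flow_velocity_Nor in E.
  erewrite is_derive_unique in E.
  2: { auto_derive; repeat split; apply ex_derive_Cinf;
       auto using Cinf_Derive, Cinf_kappa, Cinf_gmet, Cinf_tors. }
  eta_Derive. lra.
Qed.

Lemma dsS_psi3 u :
  dsS gam t (psi3 gam th t) u =
  / gmet gam t u * (Derive (tors gam t) u
    - Derive (gmet gam t) u / gmet gam t u ^ 2 * Derive (th t) u
    + / gmet gam t u * Derive (Derive (th t)) u).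
Proof.
  assert (Hg := gmet_pos u).
  unfold dsS at 1, psi3, dsS. f_equal.
  erewrite is_derive_unique.
  2: { auto_derive; repeat split; try apply ex_derive_Cinf;
       auto using Cinf_Derive, Cinf_gmet, Cinf_tors; lra. }
  eta_Derive. field. lra.
Qed.

Lemma dsS_dsS_kappa u :
  dsS gam t (dsS gam t (kappa gam t)) u =
  / gmet gam t u * (- Derive (gmet gam t) u / gmet gam t u ^ 2 * Derive (kappa gam t) u
                    + / gmet gam t u * Derive (Derive (kappa gam t)) u).
Proof.
  assert (Hg := gmet_pos u).
  unfold dsS at 1. f_equal. unfold dsS.
  apply Derive_inv_mult; [apply ex_derive_Cinf, Cinf_gmet | | lra].
  apply ex_derive_Cinf, Cinf_Derive, Cinf_kappa.
Qed.

End Frenet.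

(** * The trajectory surface *)

Definition in_slab (tbar : Rbar) (t : R) : Prop := 0 < t /\ Rbar_lt t tbar.

Lemma locally_in_slab tbar t : in_slab tbar t -> locally t (in_slab tbar).
Proof.
  intros [H0 Htbar]. apply (locally_interval _ t (Finite 0) tbar); simpl; auto.
  intros; split; auto.
Qed.

Lemma pd_app w w' f : pd w (pd w' f) = pd (w ++ w') f.
Proof. induction w as [|b w IH]; simpl; auto. rewrite IH. reflexivity. Qed.

Lemma smooth_on_pd (D : R -> R -> Prop) f w : smooth_on D f -> smooth_on D (pd w f).
Proof. intros H w' t u Hd. rewrite pd_app. apply H; auto. Qed.

Lemma smooth_on_Cn (D : R -> R -> Prop) f t : (forall u, D t u) -> smooth_on D f ->
  forall n w, Cn n (fun u => pd w f t u).
Proof.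
  intros HD H n. induction n as [|n IH]; simpl; auto. intro w. split.
  - intro x. apply (H w t x (HD x)).
  - exact (IH (false :: w)).
Qed.

Lemma smooth_on_Cinf (D : R -> R -> Prop) f t : (forall u, D t u) -> smooth_on D f -> Cinf (f t).
Proof. intros HD H n. exact (smooth_on_Cn D f t HD H n nil). Qed.

Lemma Derive_swap_in_slab tbar (f : R -> R -> R) t u :
  smooth_on (fun t _ => in_slab tbar t) f -> in_slab tbar t ->
  Derive (fun z => Derive (fun u' => f z u') u) t = Derive (fun z => Derive (fun t' => f t' z) t) u.
Proof.
  intros S Ht. destruct (locally_in_slab tbar t Ht) as [d Hd].
  apply Schwarz.
  - exists d. intros a b Ha _. assert (Hs : in_slab tbar a) by (apply Hd; exact Ha).
    repeat split.
    + exact (proj1 (S nil a b Hs)).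
    + exact (proj1 (proj2 (S nil a b Hs))).
    + exact (proj1 (S (false :: nil) a b Hs)).
    + exact (proj1 (proj2 (S (true :: nil) a b Hs))).
  - apply continuity_2d_pt_filterlim. exact (proj2 (proj2 (S (true :: false :: nil) t u Ht))).
  - apply continuity_2d_pt_filterlim. exact (proj2 (proj2 (S (false :: true :: nil) t u Ht))).
Qed.

Lemma Derive_t_Derive_u tbar (f : R -> R -> R) (h : R -> R) t u :
  smooth_on (fun t _ => in_slab tbar t) f -> in_slab tbar t ->
  (forall u', Derive (fun t' => f t' u') t = h u') ->
  Derive (fun t' => Derive (fun u' => f t' u') u) t = Derive h u.
Proof.
  intros S Ht E. rewrite (Derive_swap_in_slab tbar f t u S Ht). apply Derive_ext. auto.
Qed.

Lemma Derive_t_Derive2_u tbar (f : R -> R -> R) (h : R -> R) t u :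
  smooth_on (fun t _ => in_slab tbar t) f -> in_slab tbar t ->
  (forall u', Derive (fun t' => f t' u') t = h u') ->
  Derive (fun t' => Derive (fun u' => Derive (fun u'' => f t' u'') u') u) t = Derive (Derive h) u.
Proof.
  intros S Ht E.
  assert (S' : smooth_on (fun t _ => in_slab tbar t) (fun t' u' => Derive (fun u'' => f t' u'') u'))
    by exact (smooth_on_pd _ f (false :: nil) S).
  rewrite (Derive_swap_in_slab tbar _ t u S' Ht).
  apply Derive_ext. intro z. apply (Derive_t_Derive_u tbar); auto.
Qed.

(* The Frenet normal and binormal at a fixed u as functions of t, written through gamma_u
   and gamma_uu so that their differentiability in t is apparent. *)
Definition frame_N (gam : R -> R -> V3) (u t : R) : V3 :=
  normalize (curv_vec (Dv (gam t) u) (Dv (Dv (gam t)) u)).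

Definition frame_B (gam : R -> R -> V3) (u t : R) : V3 :=
  cross (normalize (Dv (gam t) u)) (frame_N gam u t).

Section Trajectory.

Variables (tbar : Rbar) (gam : R -> R -> V3) (th : R -> R -> R).
Hypothesis gam_smooth : smoothV_on (fun t _ => in_slab tbar t) gam.
Hypothesis th_smooth : smooth_on (fun t _ => in_slab tbar t) th.
Hypothesis gmet_pos : forall t u, in_slab tbar t -> 0 < gmet gam t u.
Hypothesis kappa_pos : forall t u, in_slab tbar t -> 0 < kappa gam t u.
Hypothesis flow_gam :
  forall t u, in_slab tbar t -> Dv (fun t' => gam t' u) t = flow_velocity gam th t u.

Lemma frenet_regular_in_slab t : in_slab tbar t -> frenet_regular gam t.
Proof.
  intro Ht. destruct gam_smooth as [S1 [S2 S3]].
  split; [|split; intro u; auto].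
  split; [|split]; [exact (smooth_on_Cinf _ _ t (fun _ => Ht) S1)
                   | exact (smooth_on_Cinf _ _ t (fun _ => Ht) S2)
                   | exact (smooth_on_Cinf _ _ t (fun _ => Ht) S3)].
Qed.

Lemma Cinf_th_in_slab t : in_slab tbar t -> Cinf (th t).
Proof. intro Ht. exact (smooth_on_Cinf _ _ t (fun _ => Ht) th_smooth). Qed.

Lemma Dv_t_Dv_u t u : in_slab tbar t ->
  Dv (fun t' => Dv (gam t') u) t = Dv (flow_velocity gam th t) u.
Proof.
  intro Ht. destruct gam_smooth as [S1 [S2 S3]].
  apply V3_ext.
  - exact (Derive_t_Derive_u tbar _ _ t u S1 Ht (fun u' => f_equal vx (flow_gam t u' Ht))).
  - exact (Derive_t_Derive_u tbar _ _ t u S2 Ht (fun u' => f_equal vy (flow_gam t u' Ht))).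
  - exact (Derive_t_Derive_u tbar _ _ t u S3 Ht (fun u' => f_equal vz (flow_gam t u' Ht))).
Qed.

Lemma Dv_t_Dv2_u t u : in_slab tbar t ->
  Dv (fun t' => Dv (Dv (gam t')) u) t = Dv (Dv (flow_velocity gam th t)) u.
Proof.
  intro Ht. destruct gam_smooth as [S1 [S2 S3]].
  apply V3_ext.
  - exact (Derive_t_Derive2_u tbar _ _ t u S1 Ht (fun u' => f_equal vx (flow_gam t u' Ht))).
  - exact (Derive_t_Derive2_u tbar _ _ t u S2 Ht (fun u' => f_equal vy (flow_gam t u' Ht))).
  - exact (Derive_t_Derive2_u tbar _ _ t u S3 Ht (fun u' => f_equal vz (flow_gam t u' Ht))).
Qed.

Lemma ex_Dv_t_Dv_u t u : in_slab tbar t -> ex_Dv (fun t' => Dv (gam t') u) t.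
Proof.
  intro Ht. destruct gam_smooth as [S1 [S2 S3]].
  repeat split; [exact (proj1 (S1 (false :: nil) t u Ht))
                 | exact (proj1 (S2 (false :: nil) t u Ht))
                 | exact (proj1 (S3 (false :: nil) t u Ht))].
Qed.

Lemma ex_Dv_t_Dv2_u t u : in_slab tbar t -> ex_Dv (fun t' => Dv (Dv (gam t')) u) t.
Proof.
  intro Ht. destruct gam_smooth as [S1 [S2 S3]].
  repeat split; [exact (proj1 (S1 (false :: false :: nil) t u Ht))
                 | exact (proj1 (S2 (false :: false :: nil) t u Ht))
                 | exact (proj1 (S3 (false :: false :: nil) t u Ht))].
Qed.

Lemma kappa_frame t u : in_slab tbar t ->
  kappa gam t u = vnorm (curv_vec (Dv (gam t) u) (Dv (Dv (gam t)) u)).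
Proof.
  intro Ht. unfold kappa. rewrite dsV_Tan_curv_vec; auto using frenet_regular_in_slab.
Qed.

Lemma Nor_frame t u : in_slab tbar t -> Nor gam t u = frame_N gam u t.
Proof.
  intro Ht. unfold frame_N. rewrite <- dsV_Tan_curv_vec; auto using frenet_regular_in_slab.
Qed.

Lemma Bin_frame t u : in_slab tbar t -> Bin gam t u = frame_B gam u t.
Proof. intro Ht. unfold Bin, frame_B. rewrite Nor_frame; auto. Qed.

Lemma ex_Dv_t_curv_vec t u : in_slab tbar t ->
  ex_Dv (fun t' => curv_vec (Dv (gam t') u) (Dv (Dv (gam t')) u)) t.
Proof.
  intro Ht. apply ex_Dv_curv_vec; auto using ex_Dv_t_Dv_u, ex_Dv_t_Dv2_u.
  rewrite dot_Dv_gam_Dv_gam by auto using frenet_regular_in_slab.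
  apply pow_lt; auto.
Qed.

Lemma ex_Dv_frame_N t u : in_slab tbar t -> ex_Dv (frame_N gam u) t.
Proof.
  intro Ht. apply ex_Dv_normalize; auto using ex_Dv_t_curv_vec.
  rewrite <- kappa_frame; auto.
Qed.

Lemma ex_Dv_frame_B t u : in_slab tbar t -> ex_Dv (frame_B gam u) t.
Proof.
  intro Ht. apply ex_Dv_cross; auto using ex_Dv_frame_N.
  apply ex_Dv_normalize; auto using ex_Dv_t_Dv_u.
  apply (gmet_pos t u Ht).
Qed.

Lemma dot_Dv2_t_gam_beta t u : in_slab tbar t ->
  dot (Dv (fun t' => Dv (fun t'' => gam t'' u) t') t) (beta gam th t u) =
  kappa gam t u * (Derive (fun t' => th t' u) t + dot (Dv (frame_N gam u) t) (Bin gam t u)).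
Proof.
  intro Ht.
  assert (reg := frenet_regular_in_slab t Ht).
  assert (Hslab := locally_in_slab tbar t Ht).
  set (k t' := vnorm (curv_vec (Dv (gam t') u) (Dv (Dv (gam t')) u))).
  set (nu_t t' := rotate (th t' u) (frame_N gam u t') (frame_B gam u t')).
  assert (Hth : ex_derive (fun t' => th t' u) t) by exact (proj1 (th_smooth nil t u Ht)).
  assert (Hk : ex_derive k t).
  { apply ex_derive_vnorm; auto using ex_Dv_t_curv_vec. unfold k. rewrite <- kappa_frame; auto. }
  assert (Hnu : ex_Dv nu_t t) by (apply ex_Dv_rotate; auto using ex_Dv_frame_N, ex_Dv_frame_B).
  assert (Xt : locally t (fun t' => Dv (fun t'' => gam t'' u) t' = vscal (k t') (nu_t t'))).
  { apply (filter_imp (in_slab tbar)); auto. intros t' Ht'.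
    rewrite flow_gam by auto. unfold flow_velocity, nu, k, nu_t, rotate.
    rewrite kappa_frame, Nor_frame, Bin_frame by auto. reflexivity. }
  assert (nu_t0 : nu_t t = nu gam th t u).
  { unfold nu_t, nu, rotate. rewrite Nor_frame, Bin_frame by auto. reflexivity. }
  rewrite (Dv_ext_loc (fun t' : R => Dv (fun t'' => gam t'' u) t') _ _ Xt), Dv_vscal by auto.
  rewrite dot_addl, !dot_scall, nu_t0, (dot_nu_beta _ _ reg), Rmult_0_r, Rplus_0_l.
  rewrite beta_rotate, Nor_frame, Bin_frame by auto.
  unfold nu_t.
  rewrite (dot_Dv_rotate (frame_N gam u) (frame_B gam u) (fun t' => th t' u));
    auto using ex_Dv_frame_N, ex_Dv_frame_B.
  - unfold k. rewrite kappa_frame by auto. reflexivity.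
  - apply (filter_imp (in_slab tbar)); auto. intros t' Ht'.
    rewrite <- Nor_frame by auto. apply dot_Nor_Nor, frenet_regular_in_slab; auto.
  - apply (filter_imp (in_slab tbar)); auto. intros t' Ht'.
    rewrite <- Bin_frame by auto. apply dot_Bin_Bin, frenet_regular_in_slab; auto.
  - apply (filter_imp (in_slab tbar)); auto. intros t' Ht'.
    rewrite <- Nor_frame, <- Bin_frame by auto. apply dot_Nor_Bin.
Qed.

Lemma dot_Dv_frame_N_Bin t u : in_slab tbar t ->
  dot (Dv (frame_N gam u) t) (Bin gam t u) =
  / kappa gam t u * / gmet gam t u ^ 2 *
  (dot (Dv (Dv (flow_velocity gam th t)) u) (Bin gam t u)
   - Derive (gmet gam t) u / gmet gam t u * dot (Dv (flow_velocity gam th t) u) (Bin gam t u)).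
Proof.
  intro Ht.
  assert (reg := frenet_regular_in_slab t Ht).
  assert (Hg := gmet_pos t u Ht). assert (Hk := kappa_pos t u Ht).
  assert (Haa : 0 < dot (Dv (gam t) u) (Dv (gam t) u))
    by (rewrite dot_Dv_gam_Dv_gam by auto; apply pow_lt; auto).
  (* gamma_u and gamma_uu are orthogonal to B, so only their t-derivatives survive, and
     by Schwarz these are the u-derivatives of the velocity. *)
  unfold frame_N.
  rewrite (dot_Dv_normalize (fun t' => curv_vec (Dv (gam t') u) (Dv (Dv (gam t')) u)));
    auto using ex_Dv_t_curv_vec.
  - rewrite dot_Dv_curv_vec;
      auto using ex_Dv_t_Dv_u, ex_Dv_t_Dv2_u, dot_Dv_gam_Bin, dot_Dv2_gam_Bin.
    rewrite Dv_t_Dv_u, Dv_t_Dv2_u, dot_Dv_gam_Dv_gam, dot_Dv_gam_Dv2_gam, <- kappa_frame by auto.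
    field. lra.
  - rewrite <- kappa_frame; auto.
  - apply dot_curv_vec_orth; auto using dot_Dv_gam_Bin, dot_Dv2_gam_Bin.
Qed.

Lemma mean_curv_flow t u : in_slab tbar t ->
  mean_curv gam th t u =
  - kappa gam t u * sin (th t u) +
  (Derive (fun t' => th t' u) t +
   / kappa gam t u * / gmet gam t u ^ 2 *
   (dot (Dv (Dv (flow_velocity gam th t)) u) (Bin gam t u)
    - Derive (gmet gam t) u / gmet gam t u * dot (Dv (flow_velocity gam th t) u) (Bin gam t u)))
  / kappa gam t u.
Proof.
  intro Ht.
  assert (reg := frenet_regular_in_slab t Ht).
  assert (Hg := gmet_pos t u Ht). assert (Hk := kappa_pos t u Ht).
  assert (Xt : Dv (fun t' => gam t' u) t = vscal (kappa gam t u) (nu gam th t u))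
    by exact (flow_gam t u Ht).
  unfold mean_curv. cbv zeta.
  rewrite dot_Dv2_t_gam_beta, dot_Dv_frame_N_Bin, Xt, Dv2_gam, Dv_gam by auto.
  rewrite !dot_scall, !dot_scalr, dot_addl, !dot_scall.
  rewrite dot_Tan_nu, dot_nu_nu, dot_Tan_Tan, dot_Tan_beta, dot_Nor_beta by auto.
  field. lra.
Qed.

End Trajectory.

Theorem mainTheorem16 (H : R) (tbar : Rbar)
    (gam : R -> R -> V3) (th : R -> R -> R) :
  (* smoothness on the time slab (0, tbar) x R *)
  smoothV_on (fun t _ => 0 < t /\ Rbar_lt t tbar) gam ->
  smooth_on (fun t _ => 0 < t /\ Rbar_lt t tbar) th ->
  (* closed curves: 2*pi-periodic in u *)
  (forall t u, gam t (u + 2 * PI) = gam t u) ->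
  (* regular curves with positive curvature *)
  (forall t u, 0 < t -> Rbar_lt t tbar -> 0 < gmet gam t u) ->
  (forall t u, 0 < t -> Rbar_lt t tbar -> 0 < kappa gam t u) ->
  (* framed curvature flow with the given theta-velocity *)
  (forall t u, 0 < t -> Rbar_lt t tbar ->
     Dv (fun t' => gam t' u) t = vscal (kappa gam t u) (nu gam th t u)) ->
  (forall t u, 0 < t -> Rbar_lt t tbar ->
     Derive (fun t' => th t' u) t = upsilon gam th t H u) ->
  (* conclusion: the trajectory surface has constant mean curvature H *)
  forall t u, 0 < t -> Rbar_lt t tbar -> mean_curv gam th t u = H.
Proof.
  intros gam_smooth th_smooth _ gmet_pos kappa_pos flow_gam flow_th t u Ht Htbar.
  assert (Hslab : in_slab tbar t) by (split; assumption).
  assert (gmet_pos' : forall t u, in_slab tbar t -> 0 < gmet gam t u)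
    by (intros t' u' [? ?]; auto).
  assert (kappa_pos' : forall t u, in_slab tbar t -> 0 < kappa gam t u)
    by (intros t' u' [? ?]; auto).
  assert (reg := frenet_regular_in_slab tbar gam gam_smooth gmet_pos' kappa_pos' t Hslab).
  assert (th_t := Cinf_th_in_slab tbar th th_smooth t Hslab).
  rewrite (mean_curv_flow tbar gam th gam_smooth th_smooth gmet_pos' kappa_pos'
             (fun t' u' H' => flow_gam t' u' (proj1 H') (proj2 H')) t u Hslab).
  rewrite (flow_th t u Ht Htbar). unfold upsilon.
  rewrite (dsS_psi3 gam t reg th th_t), (dsS_dsS_kappa gam t reg),
    (dot_Dv2_flow_velocity_Bin gam t reg th th_t), (dot_Dv_flow_velocity_Bin gam t reg th th_t).
  unfold psi1, psi2, psi3, dsS.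
  assert (Hg := gmet_pos t u Ht Htbar). assert (Hk := kappa_pos t u Ht Htbar).
  field. lra.
Qed.
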